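(* Assume (L). For $\nu>0$ define $\bar{\mathcal N}_\nu=\{x:f(x)\le f(x^\star)+\nu\lambda_{\min}^3/L^2\}$. Then for every $\nu\in(0,1]$, $$\bar{\mathcal N}_{\nu^2/3}\subseteq\mathcal N_\nu\subseteq\bar{\mathcal N}_{\nu^2}.$$
   Context: $f:\mathbb{R}^d\to\mathbb{R}$ is twice continuously differentiable with Hessian $H(x)=\nabla^2 f(x)$ satisfying $\lambda_{\min} I\preceq H(x)\preceq \lambda_{\max} I$ for all $x$, where $0<\lambda_{\min}\le\lambda_{\max}$; $x^\star$ is the unique minimizer of $f$ and $H^\star=H(x^\star)$; $\|v\|_A=\sqrt{v^\top Av}$. Lipschitz Hessian assumption (L): $\|H(x)-H(y)\|\le L\|x-y\|$ for all $x,y$ (spectral/Euclidean norms). Neighborhood: $\mathcal N_\nu=\{x:\|x-x^\star\|_{H^\star}\le \nu\lambda_{\min}^{3/2}/L\}$. *)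

From HB Require Import structures.
From mathcomp Require Import all_boot all_order all_algebra.
From mathcomp Require Import all_classical all_reals all_analysis.
Set Implicit Arguments. Unset Strict Implicit. Unset Printing Implicit Defensive.
Import Order.TTheory GRing.Theory Num.Theory.
Import numFieldNormedType.Exports.
Local Open Scope classical_set_scope.
Local Open Scope ring_scope.

Section Defs.
Variables (R : realType) (d : nat).

Definition enorm (v : 'rV[R]_d) : R := Num.sqrt (\sum_(i < d) v 0 i ^+ 2).

Definition qform (A : 'M[R]_d) (v : 'rV[R]_d) : R := (v *m A *m v^T) 0 0.

Definition Anorm (A : 'M[R]_d) (v : 'rV[R]_d) : R := Num.sqrt (qform A v).

Definition spec_norm (A : 'M[R]_d) : R :=
  sup [set enorm (v *m A) | v in [set v : 'rV[R]_d | enorm v = 1]].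

Definition loewner_le (A B : 'M[R]_d) : Prop := forall v, qform A v <= qform B v.

Definition nbhdN (xstar : 'rV[R]_d) (Hstar : 'M[R]_d) (lmin L nu : R)
  : set 'rV[R]_d :=
  [set x | Anorm Hstar (x - xstar) <= nu * (lmin * Num.sqrt lmin) / L].

Definition nbhdNbar (f : 'rV[R]_d -> R) (xstar : 'rV[R]_d) (lmin L nu : R)
  : set 'rV[R]_d :=
  [set x | f x <= f xstar + nu * lmin ^+ 3 / L ^+ 2].

End Defs.

From HB Require Import structures.
From mathcomp Require Import all_boot all_order all_algebra.
From mathcomp Require Import all_classical all_reals all_analysis.
From mathcomp Require Import ring lra.
Import Order.TTheory GRing.Theory Num.Theory.
Import numFieldNormedType.Exports.
Local Open Scope classical_set_scope.
Local Open Scope ring_scope.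
Set Implicit Arguments. Unset Strict Implicit. Unset Printing Implicit Defensive.

(* Restrict f to the segment phi(t) = f(xstar + t h), h = x - xstar.  Then phi'(0) = 0 and
   phi''(t) = h^T H(xstar + t h) h stays within L |h|^3 t of r^2 = ||h||^2 in the H(xstar) norm,
   so integrating twice gives
     r^2 s^2/2 - L |h|^3 s^3/6 <= phi(s) - phi(0) <= r^2/2 + L |h|^3/6   (s >= 0, upper at s = 1),
   while phi'' >= lmin |h|^2 makes phi strongly convex.  As sqrt(lmin) |h| <= r, the cubic term is
   at most nu r^2 as soon as r <= M := nu lmin^(3/2) / L, and M^2 = nu^2 lmin^3 / L^2.
   If r <= M, the upper bound gives f(x) - f(xstar) <= (1/2 + nu/6) M^2 <= M^2.
   If r > M, the lower bound at s = M/r gives phi(s) - phi(0) >= M^2/3, and strong convexity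
   on [s, 1] then gives f(x) - f(xstar) > M^2/3. *)


Section DerivativeComparison.
Variable R : realType.

Lemma ler_increment_derive (F G dF dG : R -> R) (a b : R) : a <= b ->
  (forall x : R, is_derive x 1 F (dF x)) -> (forall x : R, is_derive x 1 G (dG x)) ->
  (forall x, a < x < b -> dF x <= dG x) ->
  F b - F a <= G b - G a.
Proof.
move=> ab DF DG le_dFG.
have D (x : R) : is_derive x 1 (G - F) (dG x - dF x) by exact: is_deriveB.
suff : G a - F a <= G b - F b by lra.
apply: (@ger0_derive1_ndecr R (G - F) a b _ _ _ a b (lexx a) ab (lexx b)).
- by move=> x _; have [] := D x.
- move=> x; rewrite in_itv /= => xab; rewrite derive1E; have [_ ->] := D x; rewrite subr_ge0.
  exact: le_dFG.
- apply: continuous_subspaceT => x; apply: differentiable_continuous.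
  by apply/derivable1_diffP; have [] := D x.
Qed.

Lemma is_derive_cubic (c1 c2 c3 x : R) :
  is_derive x 1 (fun t => c1 * t + c2 * t ^+ 2 + c3 * t ^+ 3)
    (c1 + c2 * (2 * x) + c3 * (3 * x ^+ 2)).
Proof.
have Dpow n : is_derive x (1 : R) (fun t : R => t ^+ n) (n%:R * x ^+ n.-1).
  apply: DeriveDef; first exact: exprn_derivable.
  by rewrite exp_derive -[_ *: 1]/(_ * 1) mulr1.
have Dmon n c : is_derive x (1 : R) (fun t : R => c * t ^+ n) (c * (n%:R * x ^+ n.-1)).
  exact: is_deriveZ.
have Dadd (F G : R -> R) (dF dG : R) : is_derive x (1 : R) F dF -> is_derive x 1 G dG ->
    is_derive x 1 (fun t => F t + G t) (dF + dG).
  by move=> ? ?; exact: is_deriveD.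
have Dlin : is_derive x (1 : R) (fun t => c1 * t) c1 by have := Dmon 1%N c1; rewrite !mulr1.
have := Dadd _ _ _ _ (Dadd _ _ _ _ Dlin (Dmon 2%N c2)) (Dmon 3%N c3).
by rewrite expr1.
Qed.

End DerivativeComparison.

Section TaylorAtCriticalPoint.
Variables (R : realType) (phi p q : R -> R).
Hypothesis phi_derive : forall t : R, is_derive t 1 phi (p t).
Hypothesis p_derive : forall t : R, is_derive t 1 p (q t).
Hypothesis p0 : p 0 = 0.

Lemma taylor2_ub (q0 K t : R) : 0 <= t ->
  (forall x, 0 < x -> q x <= q0 + K * x) ->
  phi t - phi 0 <= q0 / 2 * t ^+ 2 + K / 6 * t ^+ 3.
Proof.
move=> t0 q_ub.
have p_ub s : 0 <= s -> p s <= q0 * s + K / 2 * s ^+ 2.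
  move=> s0; have cmp x : 0 < x < s -> q x <= q0 + K / 2 * (2 * x) + 0 * (3 * x ^+ 2).
    by move=> /andP[x0 _]; have := q_ub x x0; lra.
  have := ler_increment_derive s0 p_derive (is_derive_cubic q0 (K / 2) 0) cmp.
  rewrite p0 expr0n /=; lra.
have cmp x : 0 < x < t -> p x <= 0 + q0 / 2 * (2 * x) + K / 6 * (3 * x ^+ 2).
  by move=> /andP[x0 _]; have := p_ub x (ltW x0); lra.
have := ler_increment_derive t0 phi_derive (is_derive_cubic 0 (q0 / 2) (K / 6)) cmp.
rewrite !expr0n /=; lra.
Qed.

Lemma taylor2_lb (q0 K t : R) : 0 <= t ->
  (forall x, 0 < x -> q0 - K * x <= q x) ->
  q0 / 2 * t ^+ 2 - K / 6 * t ^+ 3 <= phi t - phi 0.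
Proof.
move=> t0 q_lb.
have p_lb s : 0 <= s -> q0 * s - K / 2 * s ^+ 2 <= p s.
  move=> s0; have cmp x : 0 < x < s -> q0 + - K / 2 * (2 * x) + 0 * (3 * x ^+ 2) <= q x.
    by move=> /andP[x0 _]; have := q_lb x x0; lra.
  have := ler_increment_derive s0 (is_derive_cubic q0 (- K / 2) 0) p_derive cmp.
  rewrite p0 expr0n /=; lra.
have cmp x : 0 < x < t -> 0 + q0 / 2 * (2 * x) + - K / 6 * (3 * x ^+ 2) <= p x.
  by move=> /andP[x0 _]; have := p_lb x (ltW x0); lra.
have := ler_increment_derive t0 (is_derive_cubic 0 (q0 / 2) (- K / 6)) phi_derive cmp.
rewrite !expr0n /=; lra.
Qed.

Lemma increment_ge_strongly_convex (m s t : R) : 0 <= s -> s <= t ->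
  (forall x, 0 < x -> m <= q x) ->
  m / 2 * (t ^+ 2 - s ^+ 2) <= phi t - phi s.
Proof.
move=> s0 st q_lb.
have p_lb x : 0 <= x -> m * x <= p x.
  move=> x0; have cmp y : 0 < y < x -> m + 0 * (2 * y) + 0 * (3 * y ^+ 2) <= q y.
    by move=> /andP[y0 _]; have := q_lb y y0; lra.
  have := ler_increment_derive x0 (is_derive_cubic m 0 0) p_derive cmp.
  rewrite p0 expr0n /=; lra.
have cmp x : s < x < t -> 0 + m / 2 * (2 * x) + 0 * (3 * x ^+ 2) <= p x.
  by move=> /andP[sx _]; have := p_lb x (le_trans s0 (ltW sx)); lra.
have := ler_increment_derive st (is_derive_cubic 0 (m / 2) 0) phi_derive cmp.
lra.
Qed.

End TaylorAtCriticalPoint.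

Section QuadraticForms.
Variables (R : realType) (d : nat).
Implicit Types (u v w : 'rV[R]_d) (A B : 'M[R]_d).

Lemma mul_tr_rowE u w : (u *m w^T) 0 0 = \sum_j u 0 j * w 0 j.
Proof. by rewrite !mxE; apply: eq_bigr => j _; rewrite mxE. Qed.

Lemma qformE A v : qform A v = \sum_j (v *m A) 0 j * v 0 j.
Proof. exact: mul_tr_rowE. Qed.

Lemma qformB A B v : qform (A - B) v = qform A v - qform B v.
Proof.
rewrite !qformE -sumrB; apply: eq_bigr => j _.
by rewrite mulmxBr [in LHS]mxE [(- (v *m B)) 0 j]mxE mulrBl.
Qed.

Lemma qform_scalar (a : R) v : qform a%:M v = a * enorm v ^+ 2.
Proof.
rewrite qformE /enorm sqr_sqrtr ?sumr_ge0 // => [|j _]; last exact: sqr_ge0.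
by rewrite mulr_sumr; apply: eq_bigr => j _; rewrite mul_mx_scalar mxE expr2 mulrA.
Qed.

Lemma qformZ A (c : R) v : qform A (c *: v) = c ^+ 2 * qform A v.
Proof.
rewrite !qformE mulr_sumr; apply: eq_bigr => j _.
rewrite -scalemxAl !mxE; ring.
Qed.

Lemma enorm_ge0 v : 0 <= enorm v.
Proof. exact: sqrtr_ge0. Qed.

Lemma enorm_sqr v : enorm v ^+ 2 = \sum_j v 0 j ^+ 2.
Proof. by rewrite /enorm sqr_sqrtr // sumr_ge0 // => j _; exact: sqr_ge0. Qed.

Lemma enormZ (c : R) v : enorm (c *: v) = `|c| * enorm v.
Proof.
rewrite /enorm (eq_bigr (fun j => c ^+ 2 * v 0 j ^+ 2)); last first.
  by move=> j _; rewrite mxE exprMn.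
by rewrite -mulr_sumr sqrtrM ?sqr_ge0 // sqrtr_sqr.
Qed.

Lemma norm_coord_le_enorm v i : `|v 0 i| <= enorm v.
Proof.
rewrite -sqrtr_sqr; apply: ler_wsqrtr.
by rewrite (bigD1 i) //= lerDl sumr_ge0 // => j _; exact: sqr_ge0.
Qed.

Lemma cauchy_schwarz_unit u w : enorm u = 1 ->
  `|\sum_j w 0 j * u 0 j| <= enorm w.
Proof.
move=> u1; have u2 : \sum_j u 0 j ^+ 2 = 1 by rewrite -enorm_sqr u1 expr1n.
have expand c : \sum_j (w 0 j - c * u 0 j) ^+ 2 =
    \sum_j w 0 j ^+ 2 - 2 * c * (\sum_j w 0 j * u 0 j) + c ^+ 2 * \sum_j u 0 j ^+ 2.
  by rewrite !mulr_sumr -sumrB -big_split /=; apply: eq_bigr => j _; ring.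
have : 0 <= \sum_j (w 0 j - (\sum_j w 0 j * u 0 j) * u 0 j) ^+ 2.
  by apply: sumr_ge0 => j _; exact: sqr_ge0.
rewrite expand u2 -enorm_sqr => ws.
rewrite -sqrtr_sqr -(ger0_norm (enorm_ge0 w)) -sqrtr_sqr; apply: ler_wsqrtr; lra.
Qed.

Lemma spec_norm_has_ubound A :
  has_ubound [set enorm (u *m A) | u in [set u | enorm u = 1]].
Proof.
exists (Num.sqrt (\sum_j (\sum_i `|A i j|) ^+ 2)) => _ [u /= u1 <-].
rewrite /enorm; apply: ler_wsqrtr; apply: ler_sum => j _.
rewrite -real_normK ?num_real //; apply: lerXn2r; rewrite ?nnegrE ?sumr_ge0 //.
rewrite mxE; apply: (le_trans (ler_norm_sum _ _ _)); apply: ler_sum => i _.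
by rewrite normrM ler_piMl // -u1 norm_coord_le_enorm.
Qed.

Lemma qform_le_spec_norm A v : `|qform A v| <= spec_norm A * enorm v ^+ 2.
Proof.
have [v0|v_neq0] := eqVneq (enorm v) 0.
  have coord0 j : v 0 j = 0.
    by apply/normr0_eq0/eqP; rewrite eq_le normr_ge0 -v0 norm_coord_le_enorm.
  by rewrite qformE big1 ?normr0 ?v0 ?expr0n ?mulr0 // => j _; rewrite coord0 mulr0.
have e0 : 0 < enorm v by rewrite lt_def v_neq0 enorm_ge0.
set e := enorm v in e0 *; set u := e^-1 *: v.
have u1 : enorm u = 1 by rewrite enormZ ger0_norm ?invr_ge0 ?ltW // mulVf ?gt_eqF.
have vE : v = e *: u by rewrite scalerA divff ?gt_eqF // scale1r.
clearbody u; rewrite {1}vE qformZ normrM ger0_norm ?sqr_ge0 // mulrC.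
rewrite ler_pM2r ?exprn_gt0 // qformE.
apply: le_trans (cauchy_schwarz_unit _ u1) _.
by apply: ub_le_sup; [exact: spec_norm_has_ubound | exists u].
Qed.

Lemma sqrt_mul_enorm_le_Anorm (lmin : R) A v : 0 <= lmin -> loewner_le lmin%:M A ->
  Num.sqrt lmin * enorm v <= Anorm A v.
Proof.
move=> lmin0 lminA; rewrite -[enorm v]ger0_norm ?enorm_ge0 // -sqrtr_sqr -sqrtrM //.
by apply: ler_wsqrtr; rewrite -qform_scalar.
Qed.

End QuadraticForms.

Lemma is_derive_entry (R : realType) m n (F : R -> 'M[R]_(m, n)) (t : R) dF i j :
  is_derive t 1 F dF -> is_derive t 1 (fun s => F s i j) (dF i j).
Proof.
move=> [dF1 dv].
have cv : (fun s : R => s^-1 *: ((F \o shift t) (s *: 1) - F t)) @ 0^' --> dF.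
  by rewrite -dv; exact: dF1.
have cv2 : (fun s : R => s^-1 *: (((fun s0 => F s0 i j) \o shift t) (s *: 1) - F t i j))
    @ 0^' --> dF i j.
  have -> : (fun s : R => s^-1 *: (((fun s0 => F s0 i j) \o shift t) (s *: 1) - F t i j)) =
      (fun M : 'M[R]_(m, n) => M i j) \o (fun s : R => s^-1 *: ((F \o shift t) (s *: 1) - F t)).
    by apply/funext => s /=; rewrite !mxE.
  by apply: cvg_comp cv _; exact: coord_continuous.
split; first by apply/cvg_ex; exists (dF i j).
exact: cvg_lim cv2.
Qed.

Section LineRestriction.
Variables (R : realType) (d : nat) (f : 'rV[R]_d -> R)
  (g : 'rV[R]_d -> 'rV[R]_d) (H : 'rV[R]_d -> 'M[R]_d) (a h : 'rV[R]_d).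
Hypothesis f_diff : forall x, differentiable f x.
Hypothesis f_grad : forall x v, 'd f x v = (v *m (g x)^T) 0 0.
Hypothesis g_diff : forall x, differentiable g x.
Hypothesis g_hess : forall x v, 'd g x v = v *m H x.

Lemma is_derive_line (W : normedModType R) (F : 'rV[R]_d -> W) (t : R) :
  differentiable F (a + t *: h) ->
  is_derive t 1 (fun s : R => F (a + s *: h)) ('d F (a + t *: h) h).
Proof.
move=> dF.
have E : (fun s : R => s^-1 *: (((fun s0 : R => F (a + s0 *: h)) \o shift t) (s *: 1)
      - F (a + t *: h))) =
    (fun s : R => s^-1 *: ((F \o shift (a + t *: h)) (s *: h) - F (a + t *: h))).
  by apply/funext => s /=; rewrite -[s *: 1]/(s * 1) mulr1 scalerDl addrCA.
have D : 'D_1 (fun s : R => F (a + s *: h)) t = 'D_h F (a + t *: h) by rewrite /derive E.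
split; first by rewrite /derivable E; exact: diff_derivable.
by rewrite D deriveE.
Qed.

Let phi (t : R) := f (a + t *: h).
Let p (t : R) := (h *m (g (a + t *: h))^T) 0 0.
Let q (t : R) := qform (H (a + t *: h)) h.

Lemma is_derive_f_line (t : R) : is_derive t 1 phi (p t).
Proof. by rewrite /p -f_grad; exact: is_derive_line. Qed.

Lemma is_derive_grad_line (t : R) : is_derive t 1 p (q t).
Proof.
have Dg : is_derive t 1 (fun s : R => g (a + s *: h)) (h *m H (a + t *: h)).
  by rewrite -g_hess; exact: is_derive_line.
have Dj j : is_derive t 1 (fun s : R => h 0 j * g (a + s *: h) 0 j)
    (h 0 j * (h *m H (a + t *: h)) 0 j).
  by apply: is_deriveZ; exact: (is_derive_entry 0 j Dg).
have := is_derive_sum Dj; rewrite fct_sumE.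
have -> : (fun s : R => \sum_j h 0 j * g (a + s *: h) 0 j) = p.
  by apply/funext => s; rewrite /p mul_tr_rowE.
by rewrite /q qformE (eq_bigr _ (fun j _ => mulrC _ _)).
Qed.

Hypothesis a_min : forall x, f a <= f x.

Lemma grad_line_at_min : p 0 = 0.
Proof.
have min0 : is_derive (0 : R) 1 phi 0.
  apply: (@derive1_at_min R phi (-1) 1 0) => //.
  - by move=> t _; have [] := is_derive_f_line t.
  - by rewrite in_itv /= ltrN10 ltr01.
  - by move=> t _; rewrite /phi scale0r addr0.
by have [_ <-] := is_derive_f_line 0; have [_ ->] := min0.
Qed.

Variable L : R.
Hypothesis H_lipschitz : forall x y, spec_norm (H x - H y) <= L * enorm (x - y).

Lemma hess_line_lipschitz (t : R) : 0 <= t -> `|q t - q 0| <= L * enorm h ^+ 3 * t.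
Proof.
move=> t0; rewrite /q scale0r addr0 -qformB; apply: le_trans (qform_le_spec_norm _ _) _.
have := H_lipschitz (a + t *: h) a; rewrite addrAC subrr add0r enormZ ger0_norm // => HL.
have -> : L * enorm h ^+ 3 * t = L * (t * enorm h) * enorm h ^+ 2 by ring.
by apply: ler_wpM2r => //; exact: exprn_ge0 (enorm_ge0 _).
Qed.

Lemma f_line_ub : f (a + h) - f a <= qform (H a) h / 2 + L * enorm h ^+ 3 / 6.
Proof.
have := taylor2_ub is_derive_f_line is_derive_grad_line grad_line_at_min
  (q0 := qform (H a) h) (K := L * enorm h ^+ 3) ler01.
rewrite /phi scale1r scale0r addr0 !expr1n !mulr1; apply.
move=> x /ltW/hess_line_lipschitz; rewrite /q scale0r addr0 ler_norml; lra.
Qed.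

Lemma f_line_lb (s : R) : 0 <= s ->
  qform (H a) h / 2 * s ^+ 2 - L * enorm h ^+ 3 / 6 * s ^+ 3 <= f (a + s *: h) - f a.
Proof.
move=> s0; have := taylor2_lb is_derive_f_line is_derive_grad_line grad_line_at_min
  (q0 := qform (H a) h) (K := L * enorm h ^+ 3) s0.
rewrite /phi scale0r addr0; apply.
move=> x /ltW/hess_line_lipschitz; rewrite /q scale0r addr0 ler_norml; lra.
Qed.

Lemma f_line_strongly_convex (lmin s : R) : (forall x, loewner_le lmin%:M (H x)) ->
  0 <= s -> s <= 1 ->
  lmin * enorm h ^+ 2 / 2 * (1 - s ^+ 2) <= f (a + h) - f (a + s *: h).
Proof.
move=> H_ge s0 s1.
have := increment_ge_strongly_convex is_derive_f_line is_derive_grad_line grad_line_at_min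
  (m := lmin * enorm h ^+ 2) s0 s1.
rewrite /phi scale1r expr1n mulrAC; apply=> x _.
by rewrite /q -qform_scalar; exact: H_ge.
Qed.

End LineRestriction.

Lemma cube_le_sqr (R : rcfType) (lmin L nu e r : R) : 0 < L -> 0 < lmin -> 0 <= e ->
  Num.sqrt lmin * e <= r -> L * r <= nu * (lmin * Num.sqrt lmin) ->
  L * e ^+ 3 <= nu * r ^+ 2.
Proof.
move=> L0 lmin0 e0 er Lr.
have sl0 : 0 < Num.sqrt lmin by rewrite sqrtr_gt0.
have sl2 : Num.sqrt lmin ^+ 2 = lmin by rewrite sqr_sqrtr ?ltW.
set sl := Num.sqrt lmin in sl0 sl2 er Lr *.
have r0 : 0 <= r by exact: le_trans (mulr_ge0 (ltW sl0) e0) er.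
have cube : (sl * e) ^+ 3 <= r ^+ 3 by rewrite lerXn2r // nnegrE (mulr_ge0 (ltW sl0) e0).
(* L e^3 lmin sl = L (sl e)^3 <= (L r) r^2 <= nu lmin sl r^2 *)
have : L * e ^+ 3 * (lmin * sl) <= nu * r ^+ 2 * (lmin * sl).
  have -> : L * e ^+ 3 * (lmin * sl) = L * (sl * e) ^+ 3 by rewrite -sl2; ring.
  have -> : nu * r ^+ 2 * (lmin * sl) = nu * (lmin * sl) * r ^+ 2 by ring.
  apply: le_trans (ler_wpM2l (ltW L0) cube) _.
  have -> : L * r ^+ 3 = L * r * r ^+ 2 by ring.
  by rewrite ler_wpM2r ?sqr_ge0.
by rewrite ler_pM2r // (mulr_gt0 lmin0 sl0).
Qed.

Section SublevelSetsAndEllipsoids.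
Variables (R : realType) (d : nat) (f : 'rV[R]_d -> R)
  (g : 'rV[R]_d -> 'rV[R]_d) (H : 'rV[R]_d -> 'M[R]_d) (lmin L nu : R) (xstar : 'rV[R]_d).
Hypothesis f_diff : forall x, differentiable f x.
Hypothesis f_grad : forall x v, 'd f x v = (v *m (g x)^T) 0 0.
Hypothesis g_diff : forall x, differentiable g x.
Hypothesis g_hess : forall x v, 'd g x v = v *m H x.
Hypothesis xstar_min : forall x, f xstar <= f x.
Hypothesis lmin_gt0 : 0 < lmin.
Hypothesis H_ge : forall x, loewner_le lmin%:M (H x).
Hypothesis L_gt0 : 0 < L.
Hypothesis H_lipschitz : forall x y, spec_norm (H x - H y) <= L * enorm (x - y).
Hypotheses (nu_gt0 : 0 < nu) (nu_le1 : nu <= 1).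

Let M := nu * (lmin * Num.sqrt lmin) / L.

Let L_mul_M : L * M = nu * (lmin * Num.sqrt lmin).
Proof. by rewrite /M mulrC divfK ?gt_eqF. Qed.

Let M_sqr : M ^+ 2 = nu ^+ 2 * lmin ^+ 3 / L ^+ 2.
Proof. by rewrite /M !exprMn [Num.sqrt _ ^+ 2]sqr_sqrtr ?ltW //; field; rewrite gt_eqF. Qed.

Let qform_ge0 h : 0 <= qform (H xstar) h.
Proof.
apply: le_trans _ (H_ge xstar h).
by rewrite qform_scalar; exact: mulr_ge0 (ltW lmin_gt0) (sqr_ge0 _).
Qed.

Let Anorm_sqr h : Anorm (H xstar) h ^+ 2 = qform (H xstar) h.
Proof. exact: sqr_sqrtr. Qed.

Lemma nbhdN_sub_nbhdNbar :
  nbhdN xstar (H xstar) lmin L nu `<=` nbhdNbar f xstar lmin L (nu ^+ 2).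
Proof.
move=> x; rewrite /nbhdN /nbhdNbar /= -/M -M_sqr => r_le_M.
set h := x - xstar in r_le_M; set r := Anorm (H xstar) h in r_le_M.
have r0 : 0 <= r := sqrtr_ge0 _.
have cube : L * enorm h ^+ 3 <= nu * r ^+ 2.
  apply: (cube_le_sqr (lmin := lmin)); rewrite ?enorm_ge0 //.
    exact: sqrt_mul_enorm_le_Anorm (ltW lmin_gt0) (H_ge xstar).
  by rewrite -L_mul_M ler_pM2l.
have := f_line_ub h f_diff f_grad g_diff g_hess xstar_min H_lipschitz.
rewrite [xstar + h]addrC /h subrK -/h -(Anorm_sqr h) -/r.
have : r ^+ 2 <= M ^+ 2 by rewrite lerXn2r ?nnegrE // (le_trans r0 r_le_M).
have : nu * r ^+ 2 <= r ^+ 2 by rewrite ler_piMl ?sqr_ge0.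
have := sqr_ge0 M.
lra.
Qed.

Lemma nbhdNbar_sub_nbhdN :
  nbhdNbar f xstar lmin L (nu ^+ 2 / 3) `<=` nbhdN xstar (H xstar) lmin L nu.
Proof.
move=> x; rewrite /nbhdN /nbhdNbar /= -/M => f_le; rewrite leNgt; apply/negP => M_lt_r.
set h := x - xstar in M_lt_r; set r := Anorm (H xstar) h in M_lt_r.
have xE : x = xstar + h by rewrite /h addrCA subrr addr0.
have M0 : 0 < M by rewrite /M divr_gt0 // !mulr_gt0 // sqrtr_gt0.
have r0 : 0 < r := lt_trans M0 M_lt_r.
have e2_gt0 : 0 < enorm h ^+ 2.
  have := qform_le_spec_norm (H xstar) h; rewrite -Anorm_sqr -/r ger0_norm ?sqr_ge0 //.
  rewrite lt_def sqr_ge0 andbT; apply: contraTneq => ->; rewrite mulr0 -ltNge.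
  exact: exprn_gt0.
set s := M / r.
have s0 : 0 < s by rewrite divr_gt0.
have s1 : s < 1 by rewrite ltr_pdivrMr // mul1r.
have rs : r * s = M by rewrite /s mulrC divfK ?gt_eqF.
have cube : L * (enorm h * s) ^+ 3 <= nu * M ^+ 2.
  apply: (cube_le_sqr (lmin := lmin)) => //.
  - exact: mulr_ge0 (enorm_ge0 h) (ltW s0).
  - rewrite -rs mulrA ler_pM2r //.
    exact: sqrt_mul_enorm_le_Anorm (ltW lmin_gt0) (H_ge xstar).
  - by rewrite L_mul_M.
have := f_line_lb h f_diff f_grad g_diff g_hess xstar_min H_lipschitz (ltW s0).
have := f_line_strongly_convex h f_diff f_grad g_diff g_hess xstar_min H_ge
  (ltW s0) (ltW s1).
rewrite -xE -Anorm_sqr -/r.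
have -> : r ^+ 2 / 2 * s ^+ 2 = M ^+ 2 / 2 by rewrite -rs; ring.
have -> : L * enorm h ^+ 3 / 6 * s ^+ 3 = L * (enorm h * s) ^+ 3 / 6 by ring.
move: f_le; have -> : nu ^+ 2 / 3 * lmin ^+ 3 / L ^+ 2 = M ^+ 2 / 3 by rewrite M_sqr; ring.
have : 0 < lmin * enorm h ^+ 2 / 2 * (1 - s ^+ 2).
  apply: mulr_gt0; first by rewrite divr_gt0 // mulr_gt0.
  by rewrite subr_gt0 expr2 mulr_ilt1 ?ltW.
have : nu * M ^+ 2 <= M ^+ 2 by rewrite ler_piMl ?sqr_ge0.
lra.
Qed.

End SublevelSetsAndEllipsoids.

Theorem lemmaB2 (R : realType) (d : nat) (f : 'rV[R]_d -> R)
  (g : 'rV[R]_d -> 'rV[R]_d) (H : 'rV[R]_d -> 'M[R]_d)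
  (lmin lmax L : R) (xstar : 'rV[R]_d) :
  (forall x, differentiable f x) ->
  (forall x v, 'd f x v = (v *m (g x)^T) 0 0) ->
  (forall x, differentiable g x) ->
  (forall x v, 'd g x v = v *m H x) ->
  continuous H ->
  0 < lmin -> lmin <= lmax ->
  (forall x, loewner_le (lmin%:M) (H x) /\ loewner_le (H x) (lmax%:M)) ->
  (forall x, f xstar <= f x) ->
  (forall x, f x = f xstar -> x = xstar) ->
  0 < L ->
  (forall x y, spec_norm (H x - H y) <= L * enorm (x - y)) ->
  forall nu : R, 0 < nu -> nu <= 1 ->
    nbhdNbar f xstar lmin L (nu ^+ 2 / 3) `<=` nbhdN xstar (H xstar) lmin L nu /\
    nbhdN xstar (H xstar) lmin L nu `<=` nbhdNbar f xstar lmin L (nu ^+ 2).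
Proof.
move=> f_diff f_grad g_diff g_hess _ lmin_gt0 _ H_bounds xstar_min _ L_gt0 H_lip
  nu nu_gt0 nu_le1.
have H_ge x : loewner_le lmin%:M (H x) by have [] := H_bounds x.
split.
- exact: nbhdNbar_sub_nbhdN f_diff f_grad g_diff g_hess xstar_min lmin_gt0 H_ge L_gt0 H_lip
    nu_gt0 nu_le1.
- exact: nbhdN_sub_nbhdNbar f_diff f_grad g_diff g_hess xstar_min lmin_gt0 H_ge L_gt0 H_lip
    nu_le1.
Qed.
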